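(* Let $q(x,y)=ax^2+bxy+cy^2$ with $a,b,c\in\mathbb{Z}$ be an indefinite binary quadratic form whose discriminant $\Delta(q)=b^2-4ac>0$ is not a perfect square, and let $k\in\mathbb{Z}$. Then the equation $q(x,y)=k$ has at most $4$ solutions $(x,y)\in\mathbb{Z}^2$ satisfying $$|x|\le\frac{|k|^{1/4}}{\sqrt{\Delta(q)}}.$$ *)

From Stdlib Require Import Reals ZArith List.
Open Scope Z_scope.

Definition qform (a b c x y : Z) : Z := a * x ^ 2 + b * x * y + c * y ^ 2.

Definition qdisc (a b c : Z) : Z := b ^ 2 - 4 * a * c.

Definition is_square (n : Z) : Prop := exists m : Z, n = m * m.

(* |k|^(1/4), written as sqrt (sqrt |k|) (correct also for k = 0). *)
Definition fourth_root (r : R) : R := sqrt (sqrt r).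

From Stdlib Require Import Reals ZArith List Lia Lra.
Open Scope Z_scope.

(* Completing the square gives (2cy + bx)^2 = 4ck + D x^2, so for every
   solution D x^2 is the distance from 4ck to a perfect square.  The size
   bound on x makes (D x^2)^2 <= |k|, i.e. D x^2 is tiny compared with 4ck
   (c <> 0 since D is not a square), and two perfect squares that close to
   4ck coincide.  Hence x^2 is the same for all solutions, so x takes at
   most two values, and for fixed x the equation is quadratic in y. *)

Lemma qform_complete_square (a b c x y : Z) :
  (2*c*y + b*x) * (2*c*y + b*x) = 4*c*qform a b c x y + qdisc a b c * (x*x).
Proof. unfold qform, qdisc; rewrite !Z.pow_2_r; ring. Qed.

Lemma qdisc_nonsquare_c_neq0 (a b c : Z) : ~ is_square (qdisc a b c) -> c <> 0.
Proof.
  intros hnsq ->; apply hnsq; exists b.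
  unfold qdisc; rewrite Z.pow_2_r; ring.
Qed.

Lemma sqr_diff_ge (u v : Z) : v*v < u*u -> 2 * Z.abs v + 1 <= u*u - v*v.
Proof.
  intros Hlt.
  rewrite <- (Z.abs_square u), <- (Z.abs_square v) in *.
  assert (Z.abs v < Z.abs u) by (apply Z.square_lt_simpl_nonneg; lia).
  nia.
Qed.

Lemma shifted_squares_lt (t s1 s2 u1 u2 : Z) :
  0 <= s2 -> s2 < s1 -> 4 * (s1*s1) <= Z.abs t ->
  u1*u1 = t + s1 -> u2*u2 = t + s2 -> False.
Proof.
  intros Hs2 Hlt Hbound E1 E2.
  destruct (Z_lt_le_dec t 0) as [Ht|Ht].
  - (* then s1 >= -t >= 4 s1^2, impossible for s1 >= 1 *)
    nia.
  - assert (Hu2 : 2 * s1 <= Z.abs u2) by nia.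
    pose proof (sqr_diff_ge u1 u2 ltac:(lia)); lia.
Qed.

Lemma shifted_squares_eq (t s1 s2 u1 u2 : Z) :
  0 <= s1 -> 0 <= s2 -> 4 * (s1*s1) <= Z.abs t -> 4 * (s2*s2) <= Z.abs t ->
  u1*u1 = t + s1 -> u2*u2 = t + s2 -> s1 = s2.
Proof.
  intros Hs1 Hs2 B1 B2 E1 E2.
  destruct (Z.lt_trichotomy s1 s2) as [Hlt|[Heq|Hgt]]; [exfalso|exact Heq|exfalso].
  - exact (shifted_squares_lt t s2 s1 u2 u1 Hs1 Hlt B2 E2 E1).
  - exact (shifted_squares_lt t s1 s2 u1 u2 Hs2 Hgt B1 E1 E2).
Qed.

Lemma Rsqr_le_of_le_sqrt (a r : R) : (0 <= a)%R -> (0 <= r)%R ->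
  (a <= sqrt r)%R -> (a * a <= r)%R.
Proof.
  intros Ha Hr Hle; rewrite <- (sqrt_sqrt r Hr).
  apply Rmult_le_compat; lra.
Qed.

Lemma fourth_root_bound_Z (x k D : Z) : 0 < D ->
  (Rabs (IZR x) <= fourth_root (Rabs (IZR k)) / sqrt (IZR D))%R ->
  (D * (x*x)) * (D * (x*x)) <= Z.abs k.
Proof.
  intros HD Hx; unfold fourth_root in Hx.
  assert (HDr : (0 < IZR D)%R) by (apply IZR_lt; lia).
  assert (HsD : (0 < sqrt (IZR D))%R) by (apply sqrt_lt_R0; lra).
  pose proof (Rabs_pos (IZR x)) as Hxpos.
  assert (H1 : (Rabs (IZR x) * sqrt (IZR D) <= sqrt (sqrt (Rabs (IZR k))))%R).
  { apply Rmult_le_compat_r with (r := sqrt (IZR D)) in Hx; [|lra].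
    unfold Rdiv in Hx; rewrite Rmult_assoc, Rinv_l in Hx; lra. }
  apply Rsqr_le_of_le_sqrt in H1;
    [|apply Rmult_le_pos; lra|apply sqrt_pos].
  replace (Rabs (IZR x) * sqrt (IZR D) * (Rabs (IZR x) * sqrt (IZR D)))%R
    with (IZR D * (Rabs (IZR x) * Rabs (IZR x)))%R in H1
    by (rewrite <- (sqrt_sqrt (IZR D)) at 1 by lra; ring).
  rewrite <- Rabs_mult, <- mult_IZR, Rabs_right, <- mult_IZR in H1
    by (apply Rle_ge, IZR_le; nia).
  apply Rsqr_le_of_le_sqrt in H1;
    [|apply IZR_le; nia|apply Rabs_pos].
  rewrite <- abs_IZR, <- mult_IZR in H1; apply le_IZR in H1; exact H1.
Qed.

Lemma small_solutions_same_x_sq (a b c k x1 y1 x2 y2 : Z) :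
  0 < qdisc a b c -> c <> 0 ->
  qform a b c x1 y1 = k -> qform a b c x2 y2 = k ->
  (qdisc a b c * (x1*x1)) * (qdisc a b c * (x1*x1)) <= Z.abs k ->
  (qdisc a b c * (x2*x2)) * (qdisc a b c * (x2*x2)) <= Z.abs k ->
  x1 * x1 = x2 * x2.
Proof.
  intros HD Hc Q1 Q2 B1 B2.
  pose proof (qform_complete_square a b c x1 y1) as E1.
  pose proof (qform_complete_square a b c x2 y2) as E2.
  rewrite Q1 in E1; rewrite Q2 in E2.
  assert (Habs : 4 * Z.abs k <= Z.abs (4*c*k)) by (rewrite !Z.abs_mul; nia).
  apply Z.mul_reg_l with (p := qdisc a b c); [lia|].
  apply (shifted_squares_eq (4*c*k) _ _ (2*c*y1 + b*x1) (2*c*y2 + b*x2)); try lia; nia.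
Qed.

Lemma qform_eq_fixed_x (a b c x y1 y2 : Z) :
  qform a b c x y1 = qform a b c x y2 -> y1 = y2 \/ c * (y1 + y2) + b * x = 0.
Proof.
  unfold qform; rewrite !Z.pow_2_r; intros E.
  assert (F : (y1 - y2) * (c * (y1 + y2) + b * x) = 0) by lia.
  apply Z.mul_eq_0 in F; lia.
Qed.

Lemma solutions_fixed_x_length_le2 (a b c k x : Z) (l : list (Z * Z)) : c <> 0 ->
  NoDup l -> (forall p, In p l -> fst p = x /\ qform a b c (fst p) (snd p) = k) ->
  (length l <= 2)%nat.
Proof.
  intros Hc Hnd Hl.
  destruct l as [|[x1 y1] [|[x2 y2] [|[x3 y3] l']]]; simpl; try lia; exfalso.
  destruct (Hl (x1, y1)) as [E1 Q1]; [simpl; auto|].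
  destruct (Hl (x2, y2)) as [E2 Q2]; [simpl; auto|].
  destruct (Hl (x3, y3)) as [E3 Q3]; [simpl; auto|].
  simpl in *; subst x1 x2 x3.
  apply NoDup_cons_iff in Hnd as [N1 Hnd]; apply NoDup_cons_iff in Hnd as [N2 _].
  simpl in N1, N2.
  destruct (qform_eq_fixed_x a b c x y1 y2 ltac:(congruence)) as [->|E12];
    [tauto|].
  destruct (qform_eq_fixed_x a b c x y1 y3 ltac:(congruence)) as [->|E13];
    [tauto|].
  assert (Hy : c * (y2 - y3) = 0) by lia.
  apply Z.mul_eq_0 in Hy as [|Hy]; [lia|].
  replace y3 with y2 in N2 by lia; tauto.
Qed.

Theorem lemma2 (a b c k : Z)
  (hpos : (0 < qdisc a b c)%Z) (hnsq : ~ is_square (qdisc a b c)) :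
  forall sols : list (Z * Z),
    NoDup sols ->
    (forall p, In p sols ->
       (qform a b c (fst p) (snd p) = k)%Z /\
       (Rabs (IZR (fst p)) <= fourth_root (Rabs (IZR k)) / sqrt (IZR (qdisc a b c)))%R) ->
    (length sols <= 4)%nat.
Proof.
  intros sols Hnd Hsols.
  pose proof (qdisc_nonsquare_c_neq0 a b c hnsq) as Hc.
  destruct sols as [|p0 rest] eqn:Es; [simpl; lia|]; rewrite <- Es in *.
  assert (Hx0 : forall p, In p sols -> fst p = fst p0 \/ fst p = - fst p0).
  { intros p Hp.
    destruct (Hsols p Hp) as [Q B], (Hsols p0 ltac:(rewrite Es; left; auto)) as [Q0 B0].
    apply fourth_root_bound_Z in B, B0; [|lia|lia].
    pose proof (small_solutions_same_x_sq a b c k _ _ _ _ hpos Hc Q Q0 B B0).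
    nia. }
  set (f := fun p : Z * Z => Z.eqb (fst p) (fst p0)).
  rewrite <- (filter_length f sols).
  assert (L1 : (length (filter f sols) <= 2)%nat).
  { apply (solutions_fixed_x_length_le2 a b c k (fst p0)); [exact Hc|apply NoDup_filter, Hnd|].
    intros p [Hp Fp]%filter_In; apply Z.eqb_eq in Fp; split; [exact Fp|apply Hsols, Hp]. }
  assert (L2 : (length (filter (fun p => negb (f p)) sols) <= 2)%nat).
  { apply (solutions_fixed_x_length_le2 a b c k (- fst p0)); [exact Hc|apply NoDup_filter, Hnd|].
    intros p [Hp Fp]%filter_In; apply Bool.negb_true_iff, Z.eqb_neq in Fp.
    split; [destruct (Hx0 p Hp); tauto|apply Hsols, Hp]. }
  lia.
Qed.
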